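(* Let $(\beta,\lambda)\in\mathcal T$, $J\ge2$, and $0\le\eta<1-1/J$. Let $\bm\theta^*_{\beta,\lambda}$ be a global minimizer over $\Theta$ of the clean expected SD-loss $R_{\beta,\lambda}$ and $\bm\theta^\eta_{\beta,\lambda}$ a global minimizer over $\Theta$ of the noisy expected SD-loss $R^\eta_{\beta,\lambda}$ (both assumed to exist). Then $$0\le R_{\beta,\lambda}(\bm\theta^\eta_{\beta,\lambda})-R_{\beta,\lambda}(\bm\theta^*_{\beta,\lambda})\le M^{(\eta)}_{\beta,\lambda}:=\frac{\eta}{J-1-J\eta}\cdot\frac1A\Big(J-J^{1-\beta}+\frac{1+\beta}{B}\big|1-J^{1-B}\big|\Big).$$
   Context: $\ell_{\beta,\lambda}(\bm u,\bm p)=\frac1A\sum_{j=1}^J[p_j^{1+\beta}-\frac{1+\beta}{B}u_jp_j^B+\frac AB]$ with $A=1+\lambda(1-\beta)$, $B=\beta-\lambda(1-\beta)$, and $\mathcal T=\{(\beta,\lambda):0\le\beta<1,-\frac1{1-\beta}<\lambda<\frac\beta{1-\beta}\}\cup\{(1,\lambda):\lambda\in\mathbb R\}$ (so $A,B>0$). Features $\bm X\sim G_{\bm X}$; the clean one-hot label $\bm Y\in\{\bm e_1,\dots,\bm e_J\}$ given $\bm X=\bm x$ is Multinomial$(1;\bm p^*(\bm x))$. Under uniform label noise of level $\eta$, the observed label $\widetilde{\bm Y}$ given $\bm X=\bm x$ equals $\bm e_j$ with probability $(1-\eta)p_j^*(\bm x)+\frac{\eta}{J-1}(1-p_j^*(\bm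 x))$ (i.e. the true label is kept with probability $1-\eta$ and otherwise replaced uniformly by one of the other $J-1$ labels). $R_{\beta,\lambda}(\bm\theta)=E[\ell_{\beta,\lambda}(\bm Y,\bm p(\bm X;\bm\theta))]$ and $R^\eta_{\beta,\lambda}(\bm\theta)=E[\ell_{\beta,\lambda}(\widetilde{\bm Y},\bm p(\bm X;\bm\theta))]$, where $\bm p(\bm x;\bm\theta)\in\Delta_J$ are softmax network class probabilities, $\bm\theta\in\Theta$. *)

From HB Require Import structures.
From mathcomp Require Import all_boot all_order all_algebra.
From mathcomp Require Import all_classical all_reals all_analysis.
Set Implicit Arguments. Unset Strict Implicit. Unset Printing Implicit Defensive.
Import Order.TTheory GRing.Theory Num.Theory.
Local Open Scope ring_scope.

Definition SD_A {R : realType} (beta lambda : R) : R := 1 + lambda * (1 - beta).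
Definition SD_B {R : realType} (beta lambda : R) : R := beta - lambda * (1 - beta).

Definition in_T {R : realType} (beta lambda : R) : Prop :=
  (0 <= beta /\ beta < 1 /\ - (1 - beta)^-1 < lambda /\ lambda < beta / (1 - beta))
  \/ beta = 1.

Definition SD_loss {R : realType} (J : nat) (beta lambda : R) (u p : 'I_J -> R) : R :=
  (SD_A beta lambda)^-1 *
  \sum_(j < J) (p j `^ (1 + beta)
                - (1 + beta) / SD_B beta lambda * u j * p j `^ (SD_B beta lambda)
                + SD_A beta lambda / SD_B beta lambda).

Definition onehot {R : realType} (J : nat) (k : 'I_J) : 'I_J -> R :=
  fun j => (j == k)%:R.

Definition softmax {R : realType} (J : nat) (z : 'I_J -> R) : 'I_J -> R :=
  fun j => expR (z j) / \sum_(k < J) expR (z k).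

Definition noisy_prob {R : realType} (J : nat) (eta : R) (q : 'I_J -> R) : 'I_J -> R :=
  fun j => (1 - eta) * q j + eta / (J - 1)%:R * (1 - q j).

(* expected SD-loss E[l(Y, p(X))] where X ~ P and Y | X = x ~ Multinomial(1; q x) *)
Definition exp_risk {R : realType} (d : measure_display) (T : measurableType d)
  (P : probability T R) (J : nat) (beta lambda : R)
  (q : T -> 'I_J -> R) (p : T -> 'I_J -> R) : \bar R :=
  (\int[P]_x (\sum_(k < J) q x k * SD_loss beta lambda (onehot k) (p x))%:E)%E.

Definition M_bound {R : realType} (J : nat) (beta lambda eta : R) : R :=
  eta / ((J%:R - 1) - J%:R * eta) *
  ((SD_A beta lambda)^-1 *
   (J%:R - J%:R `^ (1 - beta)
    + (1 + beta) / SD_B beta lambda * `|1 - J%:R `^ (1 - SD_B beta lambda)|)).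

From HB Require Import structures.
From mathcomp Require Import all_boot all_order all_algebra.
From mathcomp Require Import all_classical all_reals all_analysis.
From mathcomp Require Import measurable_realfun.
From mathcomp Require Import ring lra.
Set Implicit Arguments.
Unset Strict Implicit.
Unset Printing Implicit Defensive.
Import Order.TTheory GRing.Theory Num.Theory.
Local Open Scope ring_scope.

(* Under uniform noise the observed label law is (1 - eta - c) p* + c with
   c = eta / (J - 1), so the noisy risk is (1 - eta - c) R + c U, where U is the
   expected sum of the losses over all J labels.  Comparing the noisy risks of the
   two minimizers gives
     (1 - eta - c) (R theta_eta - R theta_star) <= c (U theta_star - U theta_eta),
   and U varies by at most A^-1 (J - J^(1-beta) + (1+beta)/B |1 - J^(1-B)|) because
   on the open probability simplex every power sum sum_j p_j^s lies between 1 and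
   J^(1-s), by Bernoulli's inequality applied to the J p_j. *)

Section bernoulli.
Variable R : realType.

Lemma bernoulli_powR_ge (s y : R) : 1 <= s -> 0 < y -> 1 + s * (y - 1) <= y `^ s.
Proof.
move=> s_ge1 y_gt0; have [->|s_neq1] := eqVneq s 1; first by rewrite powRr1; lra.
have s_gt1 : 1 < s by rewrite lt_neqAle eq_sym s_neq1.
have s_gt0 : 0 < s by lra.
have q_gt0 : 0 < s / (s - 1) by rewrite divr_gt0 //; lra.
have := conjugate_powR (ltW y_gt0) ler01 s_gt0 q_gt0.
rewrite invf_div powR1 mulr1.
have -> : s^-1 + (s - 1) / s = 1 by field; lra.
move=> /(_ erefl); rewrite -(ler_pM2l s_gt0).
have -> : s * (y `^ s / s + 1 * ((s - 1) / s)) = y `^ s + (s - 1) by field; lra.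
lra.
Qed.

Lemma bernoulli_powR_le (s y : R) : 0 <= s <= 1 -> 0 < y -> y `^ s <= 1 + s * (y - 1).
Proof.
move=> /andP[s_ge0 s_le1] y_gt0.
have [->|s_neq0] := eqVneq s 0; first by rewrite powRr0; lra.
have [->|s_neq1] := eqVneq s 1; first by rewrite powRr1; lra.
have s_gt0 : 0 < s by rewrite lt_neqAle eq_sym s_neq0.
have s_lt1 : s < 1 by rewrite lt_neqAle s_neq1.
have p_gt0 : 0 < s^-1 by rewrite invr_gt0.
have q_gt0 : 0 < (1 - s)^-1 by rewrite invr_gt0; lra.
have := conjugate_powR (powR_ge0 y s) ler01 p_gt0 q_gt0.
rewrite !invrK powR1 mulr1 -powRrM mulfV ?gt_eqF // powRr1 ?(ltW y_gt0) //.
have -> : 1 + s * (y - 1) = y * s + 1 * (1 - s) by ring.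
by apply; ring.
Qed.

End bernoulli.

Lemma sum_eq1_card_gt0 (R : numDomainType) (J : nat) (p : 'I_J -> R) :
  \sum_i p i = 1 -> (0 < J)%N.
Proof. by case: J p => [p|//]; rewrite big_ord0 => /eqP; rewrite eq_sym oner_eq0. Qed.

Lemma sum_eq1_le1 (R : numDomainType) (I : finType) (p : I -> R) i :
  (forall i, 0 <= p i) -> \sum_i p i = 1 -> p i <= 1.
Proof. by move=> p_ge0 <-; rewrite (bigD1 i) //= lerDl sumr_ge0. Qed.

Section power_sums_on_simplex.
Variables (R : realType) (J : nat) (p : 'I_J -> R).
Hypotheses (p_gt0 : forall i, 0 < p i) (p_sum1 : \sum_i p i = 1).

Let J_gt0 : (0 : R) < J%:R.
Proof. by rewrite ltr0n (sum_eq1_card_gt0 p_sum1). Qed.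

Let p_in01 i : 0 < p i <= 1.
Proof. by rewrite p_gt0 (sum_eq1_le1 _ _ p_sum1) // => k; exact: ltW. Qed.

Let scaled_sum_powR s : J%:R `^ s * \sum_i p i `^ s = \sum_i (J%:R * p i) `^ s.
Proof. by rewrite mulr_sumr; apply: eq_bigr => i _; rewrite powRM ?ltW. Qed.

Let sum_tangent s : \sum_i (1 + s * (J%:R * p i - 1)) = J%:R.
Proof.
rewrite big_split /= -mulr_sumr sumrB -mulr_sumr p_sum1 sumr_const card_ord.
rewrite -[1 *+ J]/(J%:R); ring.
Qed.

Let J_powR_1B (s : R) : J%:R `^ (1 - s) = J%:R / J%:R `^ s.
Proof. by rewrite powRB ?powRr1 ?ler0n //; apply/implyP => _; rewrite gt_eqF. Qed.

Lemma sum_powR_simplex_ge1 s : 1 <= s ->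
  J%:R `^ (1 - s) <= \sum_i p i `^ s <= 1.
Proof.
move=> s_ge1; apply/andP; split.
  rewrite J_powR_1B ler_pdivrMr ?powR_gt0 // mulrC scaled_sum_powR.
  rewrite -{1}(sum_tangent s); apply: ler_sum => i _.
  by apply: bernoulli_powR_ge; rewrite ?mulr_gt0.
by rewrite -[leRHS]p_sum1; apply: ler_sum => i _; exact: ge1r_powR (p_in01 i) s_ge1.
Qed.

Lemma sum_powR_simplex_le1 s : 0 <= s <= 1 ->
  1 <= \sum_i p i `^ s <= J%:R `^ (1 - s).
Proof.
move=> /andP[s_ge0 s_le1]; apply/andP; split.
  by rewrite -[leLHS]p_sum1; apply: ler_sum => i _; exact: ger1_powR (p_in01 i) s_le1.
rewrite J_powR_1B ler_pdivlMr ?powR_gt0 // mulrC scaled_sum_powR.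
rewrite -[leRHS](sum_tangent s); apply: ler_sum => i _.
by apply: bernoulli_powR_le; rewrite ?s_ge0 ?mulr_gt0.
Qed.

End power_sums_on_simplex.

Lemma dist_sum_powR_simplex (R : realType) (J : nat) (p p' : 'I_J -> R) (s : R) :
  (forall i, 0 < p i) -> \sum_i p i = 1 ->
  (forall i, 0 < p' i) -> \sum_i p' i = 1 -> 0 <= s ->
  `|\sum_i p i `^ s - \sum_i p' i `^ s| <= `|1 - J%:R `^ (1 - s)|.
Proof.
move=> p_gt0 p_sum1 p'_gt0 p'_sum1 s_ge0.
have [s_le1|s_gt1] := lerP s 1.
  have s01 : 0 <= s <= 1 by rewrite s_ge0.
  move: (sum_powR_simplex_le1 p_gt0 p_sum1 s01)
    (sum_powR_simplex_le1 p'_gt0 p'_sum1 s01).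
  move=> /andP[? ?] /andP[? ?]; rewrite [leRHS]ler0_norm ?subr_le0; last by lra.
  by rewrite ler_norml; lra.
move: (sum_powR_simplex_ge1 p_gt0 p_sum1 (ltW s_gt1))
  (sum_powR_simplex_ge1 p'_gt0 p'_sum1 (ltW s_gt1)).
move=> /andP[? ?] /andP[? ?]; rewrite [leRHS]ger0_norm ?subr_ge0; last by lra.
by rewrite ler_norml; lra.
Qed.

Section SD_loss_onehot_sums.
Variables (R : realType) (J : nat) (beta lambda : R).
Local Notation A := (SD_A beta lambda).
Local Notation B := (SD_B beta lambda).
Local Notation loss := (SD_loss beta lambda).

Lemma SD_loss_onehot (p : 'I_J -> R) k : loss (onehot k) p =
  A^-1 * (\sum_j (p j `^ (1 + beta) + A / B) - (1 + beta) / B * p k `^ B).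
Proof.
rewrite /SD_loss (bigD1 k) //= [in RHS](bigD1 k) //= /onehot eqxx mulr1.
congr (_ * _); rewrite (eq_bigr (fun j => p j `^ (1 + beta) + A / B)); first ring.
by move=> j /negbTE ->; rewrite mulr0 mul0r subr0.
Qed.

Lemma sum_SD_loss_onehot (p : 'I_J -> R) : \sum_k loss (onehot k) p =
  A^-1 * (J%:R * \sum_j p j `^ (1 + beta) + J%:R * J%:R * (A / B)
          - (1 + beta) / B * \sum_k p k `^ B).
Proof.
under eq_bigr do rewrite SD_loss_onehot.
rewrite -mulr_sumr sumrB sumr_const card_ord big_split /= sumr_const card_ord.
by rewrite -mulr_sumr; congr (_ * _); ring.
Qed.

Hypotheses (beta_ge0 : 0 <= beta) (A_gt0 : 0 < A) (B_gt0 : 0 < B).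

Let coef_ge0 : 0 <= (1 + beta) / B.
Proof. exact: divr_ge0 (addr_ge0 ler01 beta_ge0) (ltW B_gt0). Qed.

Lemma norm_SD_loss_onehot_le (p : 'I_J -> R) k :
  (forall j, 0 < p j) -> \sum_j p j = 1 ->
  `|loss (onehot k) p| <= A^-1 * (J%:R * (1 + A / B) + (1 + beta) / B).
Proof.
move=> p_gt0 p_sum1; have p01 j : 0 < p j <= 1.
  by rewrite p_gt0 (sum_eq1_le1 _ _ p_sum1) // => i; exact: ltW.
have powR_le1 j (s : R) : 0 <= s -> p j `^ s <= 1.
  by move=> s_ge0; rewrite -(powRr0 (p j)) ger_powR ?p01.
have AB_ge0 : 0 <= A / B by rewrite divr_ge0 ?ltW.
rewrite SD_loss_onehot normrM gtr0_norm ?invr_gt0 //.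
apply: ler_wpM2l; first by rewrite invr_ge0 ltW.
apply: le_trans (ler_normB _ _) _; apply: lerD.
  rewrite ger0_norm; last by apply: sumr_ge0 => j _; rewrite addr_ge0 ?powR_ge0.
  have term_le j : p j `^ (1 + beta) + A / B <= 1 + A / B.
    by rewrite lerD2r powR_le1 ?addr_ge0.
  apply: le_trans (ler_sum _ (fun j _ => term_le j)) _.
  by rewrite sumr_const card_ord mulr_natl.
by rewrite normrM !ger0_norm ?powR_ge0 // ler_piMr // powR_le1 // ltW.
Qed.

Lemma sum_SD_loss_onehot_sub_le (p p' : 'I_J -> R) :
  (forall i, 0 < p i) -> \sum_i p i = 1 ->
  (forall i, 0 < p' i) -> \sum_i p' i = 1 ->
  \sum_k loss (onehot k) p - \sum_k loss (onehot k) p'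
  <= A^-1 * (J%:R - J%:R `^ (1 - beta) + (1 + beta) / B * `|1 - J%:R `^ (1 - B)|).
Proof.
move=> p_gt0 p_sum1 p'_gt0 p'_sum1.
rewrite !sum_SD_loss_onehot -mulrBr.
apply: ler_wpM2l; first by rewrite invr_ge0 ltW.
have J_ge1 : 1 <= J%:R :> R.
  by rewrite ler1n (sum_eq1_card_gt0 p_sum1).
have Jpow_le1 : J%:R `^ (- beta) <= 1.
  by rewrite -[leRHS](powRr0 J%:R); apply: ler_powR; rewrite // oppr_le0.
have J_dist : J%:R * `|1 - J%:R `^ (1 - (1 + beta))| = J%:R - J%:R `^ (1 - beta).
  rewrite opprD addNKr ger0_norm ?subr_ge0 // mulrBr mulr1 powRD ?powRr1 ?ler0n //.
  by apply/implyP => _; rewrite gt_eqF // (lt_le_trans ltr01).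
have := dist_sum_powR_simplex p_gt0 p_sum1 p'_gt0 p'_sum1 (addr_ge0 ler01 beta_ge0).
move=> /ler_normlW /(ler_wpM2l (ler0n R J)); rewrite J_dist.
have := dist_sum_powR_simplex p_gt0 p_sum1 p'_gt0 p'_sum1 (ltW B_gt0).
move=> /lerNnormlW /(ler_wpM2l coef_ge0).
lra.
Qed.

End SD_loss_onehot_sums.

Section softmax_simplex.
Variables (R : realType) (J : nat) (z : 'I_J -> R).
Hypothesis J_gt0 : (0 < J)%N.

Let sum_expR_gt0 : 0 < \sum_k expR (z k).
Proof.
rewrite (bigD1 (Ordinal J_gt0)) //= ltr_pwDl ?expR_gt0 //.
by apply: sumr_ge0 => k _; exact: expR_ge0.
Qed.

Lemma softmax_gt0 j : 0 < softmax z j.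
Proof. by rewrite divr_gt0 ?expR_gt0. Qed.

Lemma softmax_sum1 : \sum_j softmax z j = 1.
Proof. by rewrite /softmax -mulr_suml mulfV ?gt_eqF. Qed.

End softmax_simplex.

Definition class_prob_model (R : realType) (d : measure_display) (T : measurableType d)
    (J : nat) (p : T -> 'I_J -> R) : Prop :=
  [/\ forall j, measurable_fun setT (fun x => p x j),
      forall x j, 0 < p x j & forall x, \sum_j p x j = 1].

Lemma softmax_class_prob_model (R : realType) (d : measure_display)
    (T : measurableType d) (J : nat) (z : T -> 'I_J -> R) :
  (0 < J)%N -> (forall k, measurable_fun setT (fun x => z x k)) ->
  class_prob_model (fun x => softmax (z x)).
Proof.
move=> J_gt0 z_meas; split=> [j|x j|x]; last exact: softmax_sum1.
  have mexp k : measurable_fun setT (fun x => expR (z x k)).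
    exact: measurableT_comp (@measurable_expR R) (z_meas k).
  (* measurability of inversion is obtained from that of [powR _ (-1)] *)
  have -> : (fun x => softmax (z x) j) =
      (fun x => expR (z x j) * (\sum_k expR (z x k)) `^ (-1)).
    by apply/funext => x; rewrite powR_inv1 // sumr_ge0 // => k _; exact: expR_ge0.
  have msum : measurable_fun setT (fun x => \sum_k expR (z x k)) by exact: measurable_sum.
  apply: measurable_funM; first exact: mexp.
  exact: measurableT_comp (@measurable_powR R (-1)) msum.
exact: softmax_gt0.
Qed.

Section expected_SD_risk.
Variables (R : realType) (d : measure_display) (T : measurableType d).
Variables (P : probability T R) (J : nat) (beta lambda : R).
Hypotheses (beta_ge0 : 0 <= beta) (A_gt0 : 0 < SD_A beta lambda)
  (B_gt0 : 0 < SD_B beta lambda).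
Local Notation loss := (SD_loss beta lambda).

Variable p : T -> 'I_J -> R.
Hypothesis p_model : class_prob_model p.

Let measurable_loss k : measurable_fun setT (fun x => loss (onehot k) (p x)).
Proof.
have [p_meas _ _] := p_model.
have mpow j s : measurable_fun setT (fun x => p x j `^ s).
  exact: measurableT_comp (@measurable_powR R s) (p_meas j).
apply: measurable_funM; first exact: measurable_cst.
apply: measurable_sum => j; apply: measurable_funD; last exact: measurable_cst.
apply: measurable_funB; first exact: mpow.
by apply: measurable_funM; [exact: measurable_cst | exact: mpow].
Qed.

Lemma integrable_SD_risk (q : T -> 'I_J -> R) :
  (forall k, measurable_fun setT (fun x => q x k)) -> (forall x k, `|q x k| <= 1) ->
  P.-integrable setT (fun x => (\sum_k q x k * loss (onehot k) (p x))%:E).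
Proof.
move=> q_meas q_le1; have [_ p_gt0 p_sum1] := p_model.
pose L := (SD_A beta lambda)^-1 *
  (J%:R * (1 + SD_A beta lambda / SD_B beta lambda) + (1 + beta) / SD_B beta lambda).
have bound x : `|\sum_k q x k * loss (onehot k) (p x)| <= L *+ J.
  apply: le_trans (ler_norm_sum _ _ _) _; rewrite -[J in _ *+ J]card_ord -sumr_const.
  apply: ler_sum => k _; rewrite normrM -[leRHS]mul1r ler_pM ?normr_ge0 //.
  exact: norm_SD_loss_onehot_le.
apply: measurable_bounded_integrable => //.
  exact: le_lt_trans (probability_le1 P measurableT) (ltry 1).
  by apply: measurable_sum => k; apply: measurable_funM.
rewrite /bounded_near; near=> M => x _ /=; apply: le_trans (bound x) _.
by near: M; exact: nbhs_pinfty_ge (num_real _).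
Unshelve. all: end_near. Qed.

Lemma integrable_SD_uniform_risk :
  P.-integrable setT (fun x => (\sum_k (1 : R) * loss (onehot k) (p x))%:E).
Proof.
by apply: integrable_SD_risk => [k|x k]; [exact: measurable_cst | rewrite normr1].
Qed.

Lemma exp_risk_fin_num (q : T -> 'I_J -> R) :
  (forall k, measurable_fun setT (fun x => q x k)) -> (forall x k, `|q x k| <= 1) ->
  exp_risk P beta lambda q p \is a fin_num.
Proof.
by move=> q_meas q_le1; exact: integrable_fin_num (integrable_SD_risk q_meas q_le1).
Qed.

Lemma exp_risk_affine (a c : R) (q : T -> 'I_J -> R) :
  (forall k, measurable_fun setT (fun x => q x k)) -> (forall x k, `|q x k| <= 1) ->
  exp_risk P beta lambda (fun x k => a * q x k + c) p =
  (a%:E * exp_risk P beta lambda q p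
   + c%:E * exp_risk P beta lambda (fun _ _ => 1%R) p)%E.
Proof.
move=> q_meas q_le1; have q_int := integrable_SD_risk q_meas q_le1.
have one_int := integrable_SD_uniform_risk.
rewrite /exp_risk -!integralZl // -integralD //; try exact: integrableZl.
apply: eq_integral => x _; rewrite -!EFinM -EFinD; congr EFin.
by rewrite !mulr_sumr -big_split; apply: eq_bigr => k _ /=; ring.
Qed.

End expected_SD_risk.

Lemma exp_risk_uniform_sub_le (R : realType) (d : measure_display) (T : measurableType d)
    (P : probability T R) (J : nat) (beta lambda : R) (p p' : T -> 'I_J -> R) :
  0 <= beta -> 0 < SD_A beta lambda -> 0 < SD_B beta lambda ->
  class_prob_model p -> class_prob_model p' ->
  (exp_risk P beta lambda (fun _ _ => 1%R) p - exp_risk P beta lambda (fun _ _ => 1%R) p'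
   <= ((SD_A beta lambda)^-1 * (J%:R - J%:R `^ (1 - beta) + (1 + beta) / SD_B beta lambda
        * `|1 - J%:R `^ (1 - SD_B beta lambda)|))%:E)%E.
Proof.
move=> beta_ge0 A_gt0 B_gt0 p_model p'_model.
have int := integrable_SD_uniform_risk P beta_ge0 A_gt0 B_gt0 p_model.
have int' := integrable_SD_uniform_risk P beta_ge0 A_gt0 B_gt0 p'_model.
rewrite /exp_risk -integralB //.
set D := (X in (_ <= X%:E)%E).
have int_cst : (\int[P]_x cst D%:E x = D%:E)%E.
  by rewrite integral_cst // -[RHS]mule1; congr (_ * _)%E; exact: probability_setT.
rewrite -int_cst; apply: le_integral => //; first exact: integrableB.
  exact: finite_measure_integrable_cst.
move=> x _; rewrite -EFinB lee_fin.
have [_ p_gt0 p_sum1] := p_model; have [_ p'_gt0 p'_sum1] := p'_model.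
under eq_bigr do rewrite mul1r; under [X in _ - X <= _]eq_bigr do rewrite mul1r.
exact: sum_SD_loss_onehot_sub_le.
Qed.

Lemma in_T_SD_params (R : realType) (beta lambda : R) : in_T beta lambda ->
  [/\ 0 <= beta, 0 < SD_A beta lambda & 0 < SD_B beta lambda].
Proof.
rewrite /SD_A /SD_B; case=> [[beta_ge0 [beta_lt1 [lambda_gt lambda_lt]]]|->].
  have gap_gt0 : 0 < 1 - beta by lra.
  rewrite -(ltr_pM2r gap_gt0) mulNr mulVf ?gt_eqF // in lambda_gt.
  rewrite -(ltr_pM2r gap_gt0) divfK ?gt_eqF // in lambda_lt.
  by split => //; lra.
by rewrite subrr mulr0 addr0 subr0; split; lra.
Qed.

Lemma sub_le_of_mixture_le (R : realFieldType) (a c r1 r2 u1 u2 D : R) :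
  0 < a -> 0 <= c -> a * r1 + c * u1 <= a * r2 + c * u2 -> u2 - u1 <= D ->
  r1 - r2 <= c / a * D.
Proof.
move=> a_gt0 c_ge0 mixture_le u_osc; rewrite mulrAC ler_pdivlMr // mulrC.
have := ler_wpM2l c_ge0 u_osc; lra.
Qed.

Section uniform_noise_weights.
Variables (R : realFieldType) (J : nat) (eta : R).
Hypotheses (J_gt1 : (1 < J)%N) (eta_lt : eta < 1 - J%:R^-1).

Let J1_gt0 : 0 < J%:R - 1 :> R.
Proof. by rewrite subr_gt0 ltr1n. Qed.

Let noise_gap_gt0 : 0 < J%:R - 1 - J%:R * eta.
Proof.
have J_gt0 : 0 < J%:R :> R by have := J1_gt0; lra.
have := eta_lt; rewrite -(ltr_pM2l J_gt0) mulrBr mulr1 mulfV ?gt_eqF //; lra.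
Qed.

Let clean_weight : 1 - eta - eta / (J - 1)%:R = (J%:R - 1 - J%:R * eta) / (J%:R - 1).
Proof. by rewrite natrB 1?ltnW //; field; rewrite gt_eqF. Qed.

Lemma uniform_noise_clean_weight_gt0 : 0 < 1 - eta - eta / (J - 1)%:R.
Proof. by rewrite clean_weight divr_gt0. Qed.

Lemma uniform_noise_weight_ratio :
  eta / (J - 1)%:R / (1 - eta - eta / (J - 1)%:R) = eta / (J%:R - 1 - J%:R * eta).
Proof. by rewrite clean_weight natrB 1?ltnW //; field; rewrite !gt_eqF. Qed.

End uniform_noise_weights.

Lemma noisy_probE (R : realType) (J : nat) (eta : R) (q : 'I_J -> R) :
  noisy_prob eta q = fun j => (1 - eta - eta / (J - 1)%:R) * q j + eta / (J - 1)%:R.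
Proof. by apply/funext => j; rewrite /noisy_prob; ring. Qed.

Lemma exp_risk_excess_within_M_bound (R : realType) (d : measure_display)
    (T : measurableType d) (P : probability T R) (J : nat) (beta lambda eta : R)
    (q p1 p2 : T -> 'I_J -> R) :
  in_T beta lambda -> (1 < J)%N -> 0 <= eta -> eta < 1 - J%:R^-1 ->
  (forall k, measurable_fun setT (fun x => q x k)) ->
  (forall x k, 0 <= q x k) -> (forall x, \sum_k q x k = 1) ->
  class_prob_model p1 -> class_prob_model p2 ->
  (exp_risk P beta lambda q p2 <= exp_risk P beta lambda q p1)%E ->
  (exp_risk P beta lambda (fun x => noisy_prob eta (q x)) p1
     <= exp_risk P beta lambda (fun x => noisy_prob eta (q x)) p2)%E ->
  (0 <= exp_risk P beta lambda q p1 - exp_risk P beta lambda q p2)%E /\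
  (exp_risk P beta lambda q p1 - exp_risk P beta lambda q p2
     <= (M_bound J beta lambda eta)%:E)%E.
Proof.
move=> inT J_gt1 eta_ge0 eta_lt q_meas q_ge0 q_sum1 p1_model p2_model clean_le noisy_le.
have [beta_ge0 A_gt0 B_gt0] := in_T_SD_params inT.
have q_le1 x k : `|q x k| <= 1 by rewrite ger0_norm // (sum_eq1_le1 _ _ (q_sum1 x)).
pose risk (p : T -> 'I_J -> R) := fine (exp_risk P beta lambda q p).
pose urisk (p : T -> 'I_J -> R) := fine (exp_risk P beta lambda (fun _ _ => 1) p).
have riskE p : class_prob_model p -> exp_risk P beta lambda q p = (risk p)%:E.
  by move=> p_model; rewrite fineK // exp_risk_fin_num.
have uriskE p : class_prob_model p ->
    exp_risk P beta lambda (fun _ _ => 1) p = (urisk p)%:E.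
  move=> p_model; rewrite fineK //.
  exact: integrable_fin_num (integrable_SD_uniform_risk P beta_ge0 A_gt0 B_gt0 p_model).
pose a := 1 - eta - eta / (J - 1)%:R; pose c := eta / (J - 1)%:R.
have noisy_riskE p : class_prob_model p ->
    exp_risk P beta lambda (fun x => noisy_prob eta (q x)) p
    = (a * risk p + c * urisk p)%:E.
  move=> p_model; under eq_fun do rewrite noisy_probE.
  by rewrite exp_risk_affine // riskE // uriskE.
(* keeps the following rewrites from unfolding the integrals behind [risk] *)
clearbody risk urisk.
rewrite (noisy_riskE _ p1_model) (noisy_riskE _ p2_model) lee_fin in noisy_le.
have urisk_osc := exp_risk_uniform_sub_le P beta_ge0 A_gt0 B_gt0 p2_model p1_model.
rewrite (uriskE _ p1_model) (uriskE _ p2_model) -EFinB lee_fin in urisk_osc.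
rewrite (riskE _ p1_model) (riskE _ p2_model) lee_fin in clean_le.
rewrite (riskE _ p1_model) (riskE _ p2_model) -EFinB !lee_fin.
split; first by rewrite subr_ge0.
rewrite /M_bound -(uniform_noise_weight_ratio J_gt1 eta_lt).
apply: sub_le_of_mixture_le noisy_le urisk_osc; first exact: uniform_noise_clean_weight_gt0.
by rewrite divr_ge0.
Qed.

Theorem theorem3 (R : realType) (d : measure_display) (T : measurableType d)
  (P : probability T R) (J : nat) (Theta : Type)
  (f : Theta -> T -> 'I_J -> R) (pstar : T -> 'I_J -> R)
  (beta lambda eta : R) (th_star th_eta : Theta) :
  in_T beta lambda -> (2 <= J)%N -> 0 <= eta -> eta < 1 - (J%:R)^-1 ->
  (forall th j, measurable_fun setT (fun x => f th x j)) ->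
  (forall j, measurable_fun setT (fun x => pstar x j)) ->
  (forall x j, 0 <= pstar x j) ->
  (forall x, \sum_(j < J) pstar x j = 1) ->
  (forall th, (exp_risk P beta lambda pstar (fun x => softmax (f th_star x))
               <= exp_risk P beta lambda pstar (fun x => softmax (f th x)))%E) ->
  (forall th, (exp_risk P beta lambda (fun x => noisy_prob eta (pstar x))
                 (fun x => softmax (f th_eta x))
               <= exp_risk P beta lambda (fun x => noisy_prob eta (pstar x))
                 (fun x => softmax (f th x)))%E) ->
  (0 <= exp_risk P beta lambda pstar (fun x => softmax (f th_eta x))
        - exp_risk P beta lambda pstar (fun x => softmax (f th_star x)))%E /\
  (exp_risk P beta lambda pstar (fun x => softmax (f th_eta x))
        - exp_risk P beta lambda pstar (fun x => softmax (f th_star x))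
   <= (M_bound J beta lambda eta)%:E)%E.
Proof.
move=> inT J_ge2 eta_ge0 eta_lt f_meas pstar_meas pstar_ge0 pstar_sum1 clean_opt noisy_opt.
have model th := softmax_class_prob_model (ltnW J_ge2) (f_meas th).
exact: exp_risk_excess_within_M_bound (model th_eta) (model th_star)
  (clean_opt th_eta) (noisy_opt th_star).
Qed.
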